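(* Let $\mathcal L$ be a positively sloped line in $\mathbb{R}^n$ with parametrization $\iota_{\mathcal L}:\mathbb{R}\to\mathbb{R}^n$, and let $M$ be an $n$-parameter persistence module with a free resolution $F_\bullet\to M$. Then the $1$-parameter module $M^{\mathcal L}=M\circ\iota_{\mathcal L}$ has a free resolution $F^{\mathcal L}_\bullet$ whose generators are in bijection with those of $F_\bullet$: a generator $\vec a$ of $F_i$ corresponds to a generator $\vec a^{\mathcal L}$ of $F^{\mathcal L}_i$ of grade $\iota_{\mathcal L}^{-1}(\mathrm{push}_{\mathcal L}(\mathrm{gr}(\vec a)))$.
   Context: An $n$-parameter persistence module is a functor $(\mathbb{R}^n,\le)\to\mathbf{Vect}$, equivalently an $\mathbb{R}^n$-graded module over the monoid ring of $([0,\infty)^n,+)$; free modules are direct sums of shifted copies of this ring. A line $\mathcal L=\{t\vec m+\vec c\}$ is positively sloped if all $m_i>0$; $\iota_{\mathcal L}$ is its order-preserving parametrization, isometric for $\|\cdot\|_\infty$. $\mathrm{push}_{\mathcal L}(\vec p)=\min\{\vec a\in\mathcal L:\vec a\ge\vec p\}$ (coordinatewise order). *)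

From HB Require Import structures.
From mathcomp Require Import all_boot all_order all_algebra.
From mathcomp Require Import reals.
Set Implicit Arguments. Unset Strict Implicit. Unset Printing Implicit Defensive.
Import Order.TTheory GRing.Theory Num.Theory.
Local Open Scope ring_scope.

Record pmod (k : fieldType) (P : Type) (le : P -> P -> bool) := PMod {
  pobj : P -> lmodType k;
  pmap : forall a b, le a b -> pobj a -> pobj b;
  pmap_linear : forall a b (h : le a b) (r : k) (x y : pobj a),
      pmap h (r *: x + y) = r *: pmap h x + pmap h y;
  pmap_id : forall a (h : le a a) (x : pobj a), pmap h x = x;
  pmap_comp : forall a b c (hab : le a b) (hbc : le b c) (hac : le a c)
      (x : pobj a), pmap hac x = pmap hbc (pmap hab x)
}.

Record pmor (k : fieldType) (P : Type) (le : P -> P -> bool)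
    (M N : pmod k le) := PMor {
  pmor_fun : forall a, pobj M a -> pobj N a;
  pmor_linear : forall a (r : k) (x y : pobj M a),
      pmor_fun (r *: x + y) = r *: pmor_fun x + pmor_fun y;
  pmor_natural : forall a b (h : le a b) (x : pobj M a),
      pmor_fun (pmap h x) = pmap h (pmor_fun x)
}.

(* F is free with homogeneous basis (e_g)_{g : G}, e_g of grade gr g:
   i.e. F is the direct sum of the shifted free modules generated by the e_g. *)
Definition free_with_basis (k : fieldType) (P : Type) (le : P -> P -> bool)
    (F : pmod k le) (G : Type) (gr : G -> P) (e : forall g, pobj F (gr g)) : Prop :=
  forall p : P,
    (forall (m : nat) (f : 'I_m -> G) (hf : forall j, le (gr (f j)) p)
        (c : 'I_m -> k), injective f ->
        \sum_(j < m) c j *: pmap (hf j) (e (f j)) = 0 -> forall j, c j = 0)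
    /\
    (forall v : pobj F p, exists (m : nat) (f : 'I_m -> G)
        (hf : forall j, le (gr (f j)) p) (c : 'I_m -> k),
        v = \sum_(j < m) c j *: pmap (hf j) (e (f j))).

Record free_resolution (k : fieldType) (P : Type) (le : P -> P -> bool)
    (M : pmod k le) := FreeRes {
  fr_mod : nat -> pmod k le;
  fr_d : forall i, pmor (fr_mod i.+1) (fr_mod i);
  fr_eps : pmor (fr_mod 0) M;
  gens : nat -> Type;
  grade : forall i, gens i -> P;
  fr_basis : forall i (g : gens i), pobj (fr_mod i) (grade g);
  fr_free : forall i, free_with_basis (@fr_basis i);
  fr_eps_surj : forall p (v : pobj M p), exists x, pmor_fun fr_eps x = v;
  fr_exact0 : forall p (x : pobj (fr_mod 0) p),
      pmor_fun fr_eps x = 0 <-> exists y, pmor_fun (fr_d 0) y = x;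
  fr_exact : forall i p (x : pobj (fr_mod i.+1) p),
      pmor_fun (fr_d i) x = 0 <-> exists y, pmor_fun (fr_d i.+1) y = x
}.

Section Geometry.
Variables (R : realType) (n : nat).

Definition leV (a b : 'rV[R]_n) : bool := [forall i, a 0 i <= b 0 i].

Definition line (m c : 'rV[R]_n) (t : R) : 'rV[R]_n := t *: m + c.

Definition pos_sloped (m : 'rV[R]_n) : Prop := forall i, 0 < m 0 i.

Definition is_push (m c p a : 'rV[R]_n) : Prop :=
  [/\ exists t, a = line m c t,
      leV p a &
      forall t, leV p (line m c t) -> leV a (line m c t)].

Lemma line_mono (m c : 'rV[R]_n) (hm : pos_sloped m) (s t : R) :
  s <= t -> leV (line m c s) (line m c t).
Proof.
move=> st; apply/forallP => i; rewrite /line !mxE lerD2r.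
by rewrite ler_pM2r // hm.
Qed.

End Geometry.

Definition leR (R : realType) (s t : R) : bool := s <= t.

Section Restrict.
Variables (R : realType) (n : nat) (k : fieldType).
Variables (m c : 'rV[R]_n) (hm : pos_sloped m) (M : pmod k (@leV R n)).

Definition rmap (s t : R) (h : leR s t) : pobj M (line m c s) -> pobj M (line m c t) :=
  pmap (line_mono c hm h).

Definition restrict : pmod k (@leR R).
Proof.
refine (@PMod k R (@leR R) (fun t => pobj M (line m c t)) rmap _ _ _).
- by move=> a b h r x y; rewrite /rmap pmap_linear.
- by move=> a h x; rewrite /rmap pmap_id.
- by move=> a b c' hab hbc hac x; exact: pmap_comp.
Defined.
End Restrict.

From Pilot Require Import Defs.
From HB Require Import structures.
From mathcomp Require Import all_boot all_order all_algebra.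
From mathcomp Require Import reals.
Set Implicit Arguments. Unset Strict Implicit. Unset Printing Implicit Defensive.
Import Order.TTheory GRing.Theory Num.Theory.
Local Open Scope ring_scope.

(* On a positively sloped line, [p <= iota_L t] iff
   [t >= push_time p := max_i (p_i - c_i) / m_i], so [iota_L (push_time p)]
   is [push_L p].  Restriction along [iota_L] is pointwise, hence exact, and
   by the same equivalence it sends the free module on a generator of grade [a]
   to the free module on a generator of grade [push_time a]: restricting each
   [F_i] termwise resolves [M^L]. *)

Section PushTime.
Variables (R : realType) (n : nat) (hn : (0 < n)%N).
Variables (m c : 'rV[R]_n) (hm : pos_sloped m).
Implicit Types (p : 'rV[R]_n) (t : R).

Definition coord_time p (i : 'I_n) : R := (p 0 i - c 0 i) / m 0 i.

(* The seed of the fold is itself one of the terms, so it does not alter the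
   maximum; this is where [0 < n] is needed. *)
Definition push_time p : R :=
  \big[Order.max/coord_time p (Ordinal hn)]_(i < n) coord_time p i.

Lemma le_line_coord p t i : (p 0 i <= line m c t 0 i) = (coord_time p i <= t).
Proof. by rewrite /line !mxE /coord_time ler_pdivrMr ?hm // lerBlDr. Qed.

Lemma leV_line p t : leV p (line m c t) = (push_time p <= t).
Proof.
apply/forallP/bigmax_leP => [le_p_t | [_ le_coord_t] i].
  by split=> [|i _]; rewrite -le_line_coord.
by rewrite le_line_coord le_coord_t.
Qed.

Lemma leV_push_time p : leV p (line m c (push_time p)).
Proof. by rewrite leV_line. Qed.

Lemma push_timeP p : is_push m c p (line m c (push_time p)).
Proof.
split; [by exists (push_time p) | exact: leV_push_time |].
by move=> t; rewrite leV_line; exact: line_mono.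
Qed.

End PushTime.

Section RestrictFree.
Variables (R : realType) (n : nat) (hn : (0 < n)%N).
Variables (m c : 'rV[R]_n) (hm : pos_sloped m) (k : fieldType).

Definition restrict_mor (M N : pmod k (@leV R n)) (f : pmor M N) :
  pmor (restrict c hm M) (restrict c hm N) :=
  @PMor _ _ _ (restrict c hm M) (restrict c hm N)
    (fun t => @pmor_fun _ _ _ _ _ f (line m c t))
    (fun t => @pmor_linear _ _ _ _ _ f (line m c t))
    (fun s t h => @pmor_natural _ _ _ _ _ f _ _ (line_mono c hm h)).

Variables (F : pmod k (@leV R n)) (G : Type) (gr : G -> 'rV[R]_n).
Variable e : forall g, pobj F (gr g).

(* Unqualified [pmap] resolves to [seq.pmap] after the mathcomp imports. *)
Definition restrict_basis (g : G) :
    pobj (restrict c hm F) (push_time hn m c (gr g)) :=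
  Defs.pmap (leV_push_time hn c hm (gr g)) (e g).

Lemma pmap_restrict_basis g t (h : leR (push_time hn m c (gr g)) t)
    (h' : leV (gr g) (line m c t)) :
  Defs.pmap h (restrict_basis g) = Defs.pmap h' (e g).
Proof. by rewrite /= /rmap -pmap_comp. Qed.

Lemma restrict_free : free_with_basis e -> free_with_basis restrict_basis.
Proof.
move=> Fe t; have [indep span] := Fe (line m c t); split.
  move=> q f hf a f_inj sum0; have hf' j : leV (gr (f j)) (line m c t).
    by rewrite leV_line //; exact: hf.
  apply: (indep q f hf' a f_inj); rewrite -[RHS]sum0.
  by apply: eq_bigr => j _; rewrite (pmap_restrict_basis _ (hf' j)).
move=> v; have [q [f [hf [a ->]]]] := span v.
have hf' j : leR (push_time hn m c (gr (f j))) t by rewrite /leR -leV_line.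
exists q, f, hf', a; apply: eq_bigr => j _.
by rewrite (pmap_restrict_basis _ (hf j)).
Qed.

End RestrictFree.

Definition restrict_resolution (R : realType) (k : fieldType) (n : nat)
    (hn : (0 < n)%N) (m c : 'rV[R]_n) (hm : pos_sloped m)
    (M : pmod k (@leV R n)) (F : free_resolution M) :
  free_resolution (restrict c hm M) :=
  @FreeRes _ _ _ _ (fun i => restrict c hm (fr_mod F i))
    (fun i => restrict_mor c hm (fr_d F i)) (restrict_mor c hm (fr_eps F))
    (gens F) (fun i g => push_time hn m c (grade g))
    (fun i => restrict_basis hn c hm (@fr_basis _ _ _ _ F i))
    (fun i => restrict_free hn c hm (@fr_free _ _ _ _ F i))
    (fun t => @fr_eps_surj _ _ _ _ F (line m c t))
    (fun t => @fr_exact0 _ _ _ _ F (line m c t))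
    (fun i t => @fr_exact _ _ _ _ F i (line m c t)).

Theorem mainTheorem13 (R : realType) (k : fieldType) (n : nat) (hn : (0 < n)%N)
  (m c : 'rV[R]_n) (hm : pos_sloped m)
  (M : pmod k (@leV R n)) (F : free_resolution M) :
  exists FL : free_resolution (restrict c hm M),
  exists sigma : forall i, gens F i -> gens FL i,
    (forall i, bijective (sigma i)) /\
    (forall i (g : gens F i),
       is_push m c (grade g) (line m c (grade (sigma i g)))).
Proof.
exists (restrict_resolution hn c hm F), (fun i => id); split.
- by move=> i; exists id.
- by move=> i g; exact: push_timeP.
Qed.
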